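(* Let $\mu$ be a probability measure on $\mathrm{Homeo}_+(\mathbb{R})$ with finite or countable support. If $\phi_+\equiv 1$, then $\hat\phi_+\equiv 0$. Similarly, if $\phi_-\equiv1$, then $\hat\phi_-\equiv 0$.
   Context: Setup. Let $\mu$ be a probability measure on the group $\mathrm{Homeo}_+(\mathbb{R})$ of orientation-preserving homeomorphisms of $\mathbb{R}$, supported on a finite or countable set $\{f_1,f_2,\dots\}$ with $p_i=\mu(\{f_i\})>0$, $\sum_i p_i=1$. Let $g_1,g_2,\dots$ be i.i.d. random maps with law $\mu$, and set $F_0=\mathrm{id}$, $F_n=g_n\circ\cdots\circ g_1$ (forward dynamics). The inverse dynamics is the random dynamical system defined by $\hat\mu$, the image of $\mu$ under $f\mapsto f^{-1}$ (so $\hat\mu(\{f^{-1}\})=\mu(\{f\})$); its random compositions are $\hat F_n=\hat g_n\circ\cdots\circ\hat g_1$ with $\hat g_i$ i.i.d. of law $\hat\mu$. For $x\in\mathbb{R}$ let $\phi_\pm(x)=\mathbb{P}(\lim_n F_n(x)=\pm\infty)$ and $\hat\phi_\pm(x)=\mathbb{P}(\lim_n \hat F_n(x)=\pm\infty)$. *)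

From HB Require Import structures.
From mathcomp Require Import all_boot all_order all_algebra.
From mathcomp Require Import all_classical all_reals all_analysis.
Set Implicit Arguments. Unset Strict Implicit. Unset Printing Implicit Defensive.
Import Order.TTheory GRing.Theory Num.Theory.
Import numFieldNormedType.Exports.
Local Open Scope classical_set_scope.
Local Open Scope ring_scope.

Definition homeo_plus (R : realType) (f g : R -> R) : Prop :=
  continuous f /\ continuous g /\ cancel f g /\ cancel g f /\
  (forall x y : R, x < y -> f x < f y).

(* xi : nat -> T -> I is an i.i.d. sequence of random indices with law p:
   each level set is measurable and all finite-dimensional distributions
   of (xi 0, ..., xi (n-1)) are product measures. *)
Definition iid_indices (d : measure_display) (T : measurableType d)
  (R : realType) (P : probability T R) (I : Type)
  (p : I -> R) (xi : nat -> T -> I) : Prop :=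
  (forall n i, measurable (xi n @^-1` [set i])) /\
  (forall (n : nat) (a : nat -> I),
     P (\bigcap_(k in `I_n) (xi k @^-1` [set a k])) =
     ((\prod_(k < n) p (a k))%:E)).

(* Random composition h_{xi_{n-1}} o ... o h_{xi_0}, applied to x. *)
Fixpoint rcomp (T I : Type) (R : Type) (h : I -> R -> R) (xi : nat -> T -> I)
  (n : nat) (w : T) (x : R) : R :=
  match n with
  | 0 => x
  | n'.+1 => h (xi n' w) (rcomp h xi n' w x)
  end.

Definition phi_plus (d : measure_display) (T : measurableType d)
  (R : realType) (P : probability T R) (I : Type)
  (h : I -> R -> R) (xi : nat -> T -> I) (x : R) : \bar R :=
  P [set w | (fun n => rcomp h xi n w x) @ \oo --> +oo].

Definition phi_minus (d : measure_display) (T : measurableType d)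
  (R : realType) (P : probability T R) (I : Type)
  (h : I -> R -> R) (xi : nat -> T -> I) (x : R) : \bar R :=
  P [set w | (fun n => rcomp h xi n w x) @ \oo --> -oo].

From HB Require Import structures.
From mathcomp Require Import all_boot all_order all_algebra.
From mathcomp Require Import all_classical all_reals all_analysis.
From mathcomp Require Import lra.
Import Order.TTheory GRing.Theory Num.Theory.
Import numFieldNormedType.Exports.
Local Open Scope classical_set_scope.
Local Open Scope ring_scope.
Set Implicit Arguments. Unset Strict Implicit. Unset Printing Implicit Defensive.

(* Let W_n = (xi_0, ..., xi_(n-1)) be the word of the first n random indices and
   f_s the composition of the maps along a word s, so that F_n(x) = f_(W_n)(x)
   and the inverse dynamics is F^_n(x) = f^-1_(W_n)(x).  Two facts drive the proof:
   - since the xi_k are i.i.d., W_n and its reversal rev W_n have the same law;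
   - f^-1_s(x) > x  iff  f_(rev s)(x) < x, by monotonicity of the maps.
   Hence  P(F^_m(x) > x for all m >= N) <= P(F_N(x) < x)
                                         <= 1 - P(F_m(x) >= x for all m >= N),
   and the right-hand side tends to 0 because F_m(x) -> +oo almost surely.  The
   event F^_m(x) -> +oo lies in the increasing union over N of the left-hand
   events, so it is null.  The statement about -oo follows by conjugating every
   map with x |-> -x. *)

Lemma measure_countable_bigcup (R : realType) d (T : measurableType d)
  (mu : {measure set T -> \bar R}) (J : countType) (D : J -> set T) :
  (forall j, measurable (D j)) -> (forall i j, i != j -> D i `&` D j = set0) ->
  mu (\bigcup_j D j) = \esum_(j in [set: J]) mu (D j).
Proof.
move=> mD tD.
pose E k := if @pickle_inv J k is Some j then D j else set0.
have UE : \bigcup_j D j = \bigcup_k E k.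
  apply/seteqP; split => w [j _ Dw].
    by exists (pickle j) => //; rewrite /E pickleK_inv.
  by move: Dw; rewrite /E; case: pickle_inv => // i Dw; exists i.
have mE k : measurable (E k) by rewrite /E; case: pickle_inv.
have tE : trivIset setT E.
  move=> k k' _ _; rewrite /E.
  have Hk := @pickle_invK J k; have Hk' := @pickle_invK J k'.
  case: (pickle_inv k) Hk => [j|] Hk; last by case => w [].
  case: (pickle_inv k') Hk' => [j'|] Hk'; last by case => w [].
  case=> w [Dj Dj']; have [ejj|neq] := eqVneq j j'.
    by rewrite -Hk -Hk' /= ejj.
  by have := tD _ _ neq; rewrite -subset0 => /(_ w (conj Dj Dj')).
rewrite UE measure_bigcup // nneseries_esum //.
rewrite (_ : [set x | x \in [set: nat]] = [set: nat]); last first.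
  by apply/seteqP; split => x //= _; rewrite in_setT.
transitivity (\esum_(k in [set: nat] `&` range (@pickle J)) mu (E k)).
  rewrite esum_mkcondr; apply: eq_esum => k _; case: ifPn => // Hk.
  rewrite /E; case Hp: pickle_inv => [j|]; last exact: measure0.
  exfalso; move/negP: Hk; apply; rewrite inE; exists j => //.
  by have := @pickle_invK J k; rewrite Hp.
rewrite setTI esum_image; last first.
  by move=> x y _ _; exact: (pcan_inj (@pickleK_inv J)).
by apply: eq_esum => j _; rewrite /E pickleK_inv.
Qed.

Definition always_from (T : Type) (A : nat -> set T) (N : nat) : set T :=
  \bigcap_(m in [set m | (N <= m)%N]) A m.

Definition eventually_always (T : Type) (A : nat -> set T) : set T :=
  \bigcup_N always_from A N.

Lemma nondecreasing_always_from (T : Type) (A : nat -> set T) :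
  nondecreasing_seq (always_from A).
Proof.
move=> a b ab; apply/subsetPset => w Hw m bm; apply: Hw; exact: leq_trans ab bm.
Qed.

Lemma always_from_sub (T : Type) (A : nat -> set T) N : always_from A N `<=` A N.
Proof. by move=> w /(_ N (leqnn N)). Qed.

Section MeasurableLimInf.
Variables (d : measure_display) (T : measurableType d) (A : nat -> set T).
Hypothesis mA : forall m, measurable (A m).

Lemma measurable_always_from N : measurable (always_from A N).
Proof. by apply: bigcap_measurable => [|m _]; [exists N => /= | exact: mA]. Qed.

Lemma measurable_eventually_always : measurable (eventually_always A).
Proof. by apply: bigcup_measurable => N _; exact: measurable_always_from. Qed.

End MeasurableLimInf.

Section WordCompositions.
Variables (R : realType) (I : Type).

(* Composition of the maps h i along the word s, first letter applied first. *)
Definition wcomp (h : I -> R -> R) (s : seq I) (x : R) : R :=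
  foldl (fun acc i => h i acc) x s.

Lemma wcomp_rcons h s i x : wcomp h (rcons s i) x = h i (wcomp h s x).
Proof. by rewrite /wcomp foldl_rcons. Qed.

Variables (f finv : I -> R -> R).
Hypothesis f_incr : forall i, {homo f i : a b / a < b}.
Hypothesis finvK : forall i, cancel (finv i) (f i).

Lemma wcomp_mono s : {mono wcomp f s : a b / a < b}.
Proof.
have f_mono i : {mono f i : a b / a < b}.
  exact: (leW_mono (le_mono (@f_incr i))).
elim: s => [|i s IH] a b //.
by rewrite -(f_mono i a b); exact: IH.
Qed.

Lemma wcomp_revK s x : wcomp f s (wcomp finv (rev s) x) = x.
Proof.
elim: s x => [|i s IH] x //.
by rewrite rev_cons wcomp_rcons /= finvK IH.
Qed.

Lemma wcomp_inv_gt s x y : (y < wcomp finv s x) = (wcomp f (rev s) y < x).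
Proof. by rewrite -{1}(revK s) -(wcomp_mono (rev s)) wcomp_revK. Qed.

End WordCompositions.

Section Words.
Variables (I T : Type) (xi : nat -> T -> I).

Definition word n w : seq I := [seq xi k w | k <- iota 0 n].

Lemma word_rcons n w : word n.+1 w = rcons (word n w) (xi n w).
Proof. by rewrite /word -addn1 iotaD map_cat cats1. Qed.

Lemma size_word n w : size (word n w) = n.
Proof. by rewrite /word size_map size_iota. Qed.

Lemma nth_word n w k i0 : (k < n)%N -> nth i0 (word n w) k = xi k w.
Proof. by move=> kn; rewrite /word (nth_map 0%N) ?size_iota // nth_iota. Qed.

Lemma rcomp_word (R : realType) (h : I -> R -> R) n w x :
  rcomp h xi n w x = wcomp h (word n w) x.
Proof. by elim: n => [|n IH] //; rewrite [LHS]/= IH word_rcons wcomp_rcons. Qed.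

End Words.

Section RandomWords.
Variables (R : realType) (I : countType) (d : measure_display) (T : measurableType d)
  (P : probability T R) (p : I -> R) (xi : nat -> T -> I).
Hypothesis hiid : iid_indices P p xi.
Local Notation word := (word xi).

Lemma measurable_word1 n s : measurable (word n @^-1` [set s]).
Proof.
elim: n s => [|n IH] s.
  case: s => [|i s].
    by rewrite (_ : _ @^-1` _ = setT) //; apply/seteqP; split => w.
  by rewrite (_ : _ @^-1` _ = set0) //; apply/seteqP; split => w.
case/lastP: s => [|s i].
  by rewrite (_ : _ @^-1` _ = set0) //; apply/seteqP; split => w //; rewrite /= word_rcons.
rewrite (_ : _ @^-1` _ = word n @^-1` [set s] `&` xi n @^-1` [set i]).
  by apply: measurableI => //; exact: hiid.1.
apply/seteqP; split => w; rewrite /preimage /= word_rcons.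
  by move/rcons_inj => [-> ->].
by case=> -> ->.
Qed.

(* Every event expressed through a random word is measurable, since words
   range over a countable set. *)
Lemma measurable_word n S : measurable (word n @^-1` S).
Proof.
rewrite (_ : _ @^-1` _ = \bigcup_(s : seq I) (word n @^-1` ([set s] `&` S))).
  apply: countable_bigcupT_measurable; first exact: countableP.
  move=> s; case: (pselect (S s)) => Ss.
    rewrite (_ : [set s] `&` S = [set s]); first exact: measurable_word1.
    by apply/seteqP; split => t /=; [case|move=> ->].
  rewrite (_ : [set s] `&` S = set0); first by rewrite preimage_set0.
  by apply/seteqP; split => t //= [-> ].
apply/seteqP; split => w /=; first by move=> Sw; exists (word n w).
by case=> s _ [-> ].
Qed.

Lemma prob_word1 n s : size s = n -> P (word n @^-1` [set s]) = (\prod_(i <- s) p i)%:E.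
Proof.
case: s => [|i0 s'] sn.
  rewrite -sn big_nil (_ : _ @^-1` _ = setT); first exact: probability_setT.
  by apply/seteqP; split => w // _; rewrite /word -sn.
set s := i0 :: s' in sn *.
have -> : word n @^-1` [set s] = \bigcap_(k in `I_n) (xi k @^-1` [set nth i0 s k]).
  apply/seteqP; split => w Hw.
    by move=> k kn; rewrite /preimage /= -Hw nth_word.
  apply: (@eq_from_nth _ i0); first by rewrite size_word sn.
  by move=> k; rewrite size_word => kn; rewrite nth_word //; exact: (Hw k kn).
by rewrite hiid.2 (big_nth i0) sn big_mkord.
Qed.

Lemma prob_word1_rev n s : P (word n @^-1` [set rev s]) = P (word n @^-1` [set s]).
Proof.
have [sn|sn] := eqVneq (size s) n.
  by rewrite !prob_word1 ?size_rev ?(eqP sn) // big_rev.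
have no_word t : size t != n -> word n @^-1` [set t] = set0.
  by move=> tn; apply/seteqP; split => w // Hw; move: tn; rewrite -Hw size_word eqxx.
by rewrite !no_word ?size_rev.
Qed.

Lemma prob_word_esum n S :
  P (word n @^-1` S) = \esum_(s in [set: seq I]) P (word n @^-1` ([set s] `&` S)).
Proof.
rewrite -measure_countable_bigcup.
- congr (P _); apply/seteqP; split => w; first by move=> Sw; exists (word n w).
  by case=> s _ [].
- by move=> s; exact: measurable_word.
- move=> i j ij; apply/seteqP; split => w //; case=> -[Hi _] [Hj _].
  by move: ij; rewrite -Hi -Hj eqxx.
Qed.

Lemma prob_word_rev n S : P (word n @^-1` (rev @^-1` S)) = P (word n @^-1` S).
Proof.
rewrite !prob_word_esum (reindex_esum [set: seq I] [set: seq I] (@rev I)); last first.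
  split => [x //|x y _ _|y _]; first exact: (can_inj (@revK I)).
  by exists (rev y) => //; rewrite revK.
apply: eq_esum => t _; case: (pselect (S t)) => St.
  rewrite (_ : [set rev t] `&` _ = [set rev t]); last first.
    by apply/seteqP; split => u /=; [case|move=> ->; split => //; rewrite revK].
  rewrite (_ : [set t] `&` S = [set t]); last first.
    by apply/seteqP; split => u /=; [case|move=> ->].
  exact: prob_word1_rev.
rewrite (_ : [set rev t] `&` _ = set0); last first.
  by apply/seteqP; split => u //= [->]; rewrite revK.
by rewrite (_ : [set t] `&` S = set0) //; apply/seteqP; split => u //= [->].
Qed.

Lemma measurable_eventually_word (S : nat -> set (seq I)) :
  measurable (eventually_always (fun m => word m @^-1` S m)).
Proof. by apply: measurable_eventually_always => m; exact: measurable_word. Qed.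

Lemma measurable_word_cvgy (g : nat -> seq I -> R) :
  measurable [set w | (fun n => g n (word n w)) @ \oo --> +oo].
Proof.
rewrite (_ : [set w | _] = \bigcap_(M in [set: nat])
   eventually_always (fun m => word m @^-1` [set s | M%:R < g m s])).
  by apply: bigcapT_measurable => M; exact: measurable_eventually_word.
apply/seteqP; split => w /=.
  move=> H M _; have [N _ HN] := (cvgryPgt _).1 H M%:R.
  by exists N => // m Nm; exact: HN.
move=> H; apply/cvgryPgt => A.
have [N _ HN] := H (Num.bound `|A|) Logic.I.
exists N => // m Nm /=; apply: lt_trans (HN m Nm).
exact: le_lt_trans (ler_norm A) (archi_boundP (normr_ge0 A)).
Qed.

(* Reversal invariance bounds the tails: "rev W_m in S m for all m >= N" and
   "W_m avoids S m for all m >= N" have total probability at most one. *)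
Lemma always_from_rev_bound (S : nat -> set (seq I)) N :
  (P (always_from (fun m => word m @^-1` (rev @^-1` S m)) N) <=
   1 - P (always_from (fun m => word m @^-1` (~` S m)) N))%E.
Proof.
set E := always_from _ N; set K := always_from _ N.
have mE : measurable E by apply: measurable_always_from => m; exact: measurable_word.
have mK : measurable K by apply: measurable_always_from => m; exact: measurable_word.
have mA := measurable_word N (S N).
have EA : (P E <= P (word N @^-1` S N))%E.
  rewrite -prob_word_rev; apply: le_measure; rewrite ?inE //; last exact: always_from_sub.
  exact: measurable_word.
have KA : (P K <= 1 - P (word N @^-1` S N))%E.
  rewrite -probability_setC //; apply: le_measure; rewrite ?inE //.
    exact: measurableC.
  exact: always_from_sub.
move: EA KA; rewrite -(fineK (fin_num_measure P _ mE)) -(fineK (fin_num_measure P _ mK)).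
by rewrite -(fineK (fin_num_measure P _ mA)) -!EFinB !lee_fin; lra.
Qed.

(* Both lim infs are
   increasing unions, so the tail bound passes to the limit. *)
Lemma eventually_rev_null (S : nat -> set (seq I)) :
  P (eventually_always (fun m => word m @^-1` (~` S m))) = 1%E ->
  P (eventually_always (fun m => word m @^-1` (rev @^-1` S m))) = 0%E.
Proof.
move=> HK.
have mw (B : nat -> set (seq I)) m : measurable (word m @^-1` B m).
  exact: measurable_word.
have cvg_tail B := nondecreasing_cvg_mu (mu := P) (measurable_always_from (mw B))
  (measurable_eventually_always (mw B)) (nondecreasing_always_from _).
have cE := cvg_tail (fun m => rev @^-1` S m).
have cB : (fun N => 1 - P (always_from (fun m => word m @^-1` (~` S m)) N))%E
    @ \oo --> 0%E.
  rewrite -(subee (x:=1%E)) //; apply: cvgeB => //; first exact: cvg_cst.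
  by rewrite -HK; exact: cvg_tail.
apply/eqP; rewrite eq_le measure_ge0 andbT.
rewrite -(cvg_lim _ cE) // -(cvg_lim _ cB) //.
apply: lee_lim; [exact: cvgP cE | exact: cvgP cB | exact: nearW (always_from_rev_bound S)].
Qed.

End RandomWords.

Section InverseDynamics.
Variables (R : realType) (I : countType) (d : measure_display) (T : measurableType d)
  (P : probability T R) (p : I -> R) (xi : nat -> T -> I) (f finv : I -> R -> R).
Hypothesis hiid : iid_indices P p xi.
Hypothesis f_incr : forall i, {homo f i : a b / a < b}.
Hypothesis finvK : forall i, cancel (finv i) (f i).

Let measurable_rcomp_cvgy (h : I -> R -> R) x :
  measurable [set w | (fun n => rcomp h xi n w x) @ \oo --> +oo].
Proof.
rewrite (_ : [set w | _] = [set w | (fun n => wcomp h (word xi n w) x) @ \oo --> +oo]).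
  exact: (measurable_word_cvgy hiid (fun n s => wcomp h s x)).
by apply/seteqP; split => w; rewrite /= (funext (fun n => rcomp_word xi h n w x)).
Qed.

Lemma phi_plus_inverse :
  (forall x, phi_plus P f xi x = 1%E) -> forall x, phi_plus P finv xi x = 0%E.
Proof.
move=> phi1 x.
pose S : nat -> set (seq I) := fun=> [set s | wcomp f s x < x].
have mK := measurable_eventually_word hiid (fun m => ~` S m).
have mE := measurable_eventually_word hiid (fun m => rev @^-1` S m).
(* Forward orbits escaping to +oo eventually stay above x. *)
have forward : P (eventually_always (fun m => word xi m @^-1` (~` S m))) = 1%E.
  apply/eqP; rewrite eq_le probability_le1 //= -(phi1 x).
  apply: le_measure; rewrite ?inE //.
  move=> w /(cvgryPgt _).1 /(_ x) [N _ HN]; exists N => // m Nm.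
  by rewrite /S /preimage /= -rcomp_word ltNge ltW //; exact: HN.
(* Inverse orbits escaping to +oo eventually stay above x, i.e. the reversed
   words eventually send x below x in the forward dynamics. *)
have inverse : (phi_plus P finv xi x <=
    P (eventually_always (fun m => word xi m @^-1` (rev @^-1` S m))))%E.
  apply: le_measure; rewrite ?inE //.
  move=> w /(cvgryPgt _).1 /(_ x) [N _ HN]; exists N => // m Nm.
  by rewrite /S /preimage /= -(wcomp_inv_gt f_incr finvK) -rcomp_word; exact: HN.
apply/eqP; rewrite eq_le -{1}(eventually_rev_null hiid forward) inverse /=.
exact: measure_ge0.
Qed.

End InverseDynamics.

Definition reflect_maps (R : realType) (I : Type) (h : I -> R -> R) : I -> R -> R :=
  fun i x => - h i (- x).

Lemma rcomp_reflect (R : realType) (T I : Type) (h : I -> R -> R) xi n (w : T) x :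
  rcomp (reflect_maps h) xi n w x = - rcomp h xi n w (- x).
Proof. by elim: n => [|n IH] /=; rewrite ?opprK // IH /reflect_maps opprK. Qed.

Lemma phi_minus_reflect (R : realType) (I : Type) d (T : measurableType d)
  (P : probability T R) (h : I -> R -> R) xi x :
  phi_minus P h xi x = phi_plus P (reflect_maps h) xi (- x).
Proof.
rewrite /phi_minus /phi_plus; congr (P _); apply/seteqP; split => w /=;
  rewrite (funext (fun n => rcomp_reflect h xi n w (- x))) opprK.
- by move/cvgNry.
- by move/cvgNry.
Qed.

Unset Implicit Arguments.
Set Strict Implicit.

Theorem mainTheorem9 (R : realType) (I : countType)
  (f finv : I -> R -> R) (p : I -> R)
  (d : measure_display) (T : measurableType d) (P : probability T R)
  (xi : nat -> T -> I) :
  (forall i, homeo_plus (f i) (finv i)) ->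
  (forall i, 0 < p i) ->
  (\esum_(i in [set: I]) (p i)%:E = 1)%E ->
  iid_indices P p xi ->
  ((forall x, phi_plus P f xi x = 1%E) -> forall x, phi_plus P finv xi x = 0%E) /\
  ((forall x, phi_minus P f xi x = 1%E) -> forall x, phi_minus P finv xi x = 0%E).
Proof.
move=> hf _ _ hiid.
have f_incr i : {homo f i : a b / a < b} by have [_ [_ [_ [_ ?]]]] := hf i.
have finvK i : cancel (finv i) (f i) by have [_ [_ [_ [? _]]]] := hf i.
split; first exact: phi_plus_inverse hiid f_incr finvK.
move=> phi1 x; rewrite phi_minus_reflect.
apply: (phi_plus_inverse (f := reflect_maps f) hiid) => [i a b ab|i y|y].
- by rewrite /reflect_maps /= ltrN2 f_incr // ltrN2.
- by rewrite /reflect_maps /= opprK finvK opprK.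
- by rewrite -[y]opprK -phi_minus_reflect.
Qed.
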